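(* With notation as in the context, let $\mathcal A_y$ be the $*$-subalgebra of $\mathcal A$ generated by $C_K(X)$ and $C_{c,K}(X\setminus\{y\})\,t$. Then $\mathcal A_\infty=\mathcal A_y$.
   Context: Let $X$ be an infinite, totally disconnected, compact metrizable space, $T$ a homeomorphism, $K$ a field with involution, $C_K(X)$ the $*$-algebra of locally constant functions $X\to K$, $\mathcal A=C_K(X)\rtimes_T\mathbb Z$ the algebraic crossed product (finite sums $\sum f_it^i$, $tf=(f\circ T^{-1})t$, $(ft^i)^*=t^{-i}f^*$). For an open $U\subseteq X$, $C_{c,K}(U)$ is the ideal of $C_K(X)$ generated (equivalently, spanned) by the $\chi_V$ with $V\subseteq U$ clopen. Fix $y\in X$, a decreasing sequence of clopen sets $E_n$ with $\bigcap_nE_n=\{y\}$, and partitions $\mathcal P_n$ of $X\setminus E_n$ (finite families of nonempty pairwise disjoint clopen sets with union $X\setminus E_n$) such that each member of $\mathcal P_{n+1}\cup\{E_{n+1}\}$ lies in a member of $\mathcal P_n\cup\{E_n\}$ and $\bigcup_n(\mathcal P_n\cup\{E_n\})$ generates the topology of $X$. $\mathcal A_n$ is the unital $*$-subalgebra of $\mathcal A$ generated by $\{\chi_Zt:Z\in\mathcal P_n\}$ and $\mathcal A_\infty=\bigcup_n\mathcal A_n$. *)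

From Stdlib Require Rdefinitions.
From Stdlib Require Import ClassicalEpsilon.
From HB Require Import structures.
From mathcomp Require Import all_boot all_order all_algebra.
Set Implicit Arguments. Unset Strict Implicit. Unset Printing Implicit Defensive.
Import GRing.Theory.

Section Topology.
Variable X : Type.
Variable op : (X -> Prop) -> Prop.

Definition is_topology : Prop :=
  [/\ op (fun _ => True),
      (forall U V, op U -> op V -> op (fun x => U x /\ V x)) &
      (forall F : (X -> Prop) -> Prop, (forall U, F U -> op U) ->
         op (fun x => exists2 U, F U & U x))].

Definition clopen (V : X -> Prop) : Prop := op V /\ op (fun x => ~ V x).

Definition compact : Prop :=
  forall F : (X -> Prop) -> Prop, (forall U, F U -> op U) ->
    (forall x, exists2 U, F U & U x) ->
    exists (n : nat) (U : 'I_n -> X -> Prop),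
      (forall i, F (U i)) /\ (forall x, exists i, U i x).

Definition metrizable : Prop :=
  exists d : X -> X -> Rdefinitions.R,
    [/\ (forall x y, d x y = Rdefinitions.R0 <-> x = y),
        (forall x y, d x y = d y x),
        (forall x y z, Rdefinitions.Rle (d x z) (Rdefinitions.Rplus (d x y) (d y z))) &
        (forall U, op U <->
           (forall x, U x -> exists eps, Rdefinitions.Rlt Rdefinitions.R0 eps /\
              (forall z, Rdefinitions.Rlt (d x z) eps -> U z)))].

Definition connected_subset (S : X -> Prop) : Prop :=
  ~ exists U V, op U /\ op V /\ [/\
      (forall x, S x -> U x \/ V x),
      (exists x, S x /\ U x), (exists x, S x /\ V x) &
      (forall x, ~ [/\ S x, U x & V x])].

Definition totally_disconnected : Prop :=
  forall S, connected_subset S -> forall x y, S x -> S y -> x = y.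

Definition infinite_type : Prop :=
  ~ exists (n : nat) (f : 'I_n -> X), forall x, exists i, f i = x.

Definition generates_topology (B : (X -> Prop) -> Prop) : Prop :=
  forall U, op U <->
    (forall x, U x -> exists (n : nat) (W : 'I_n -> X -> Prop),
       [/\ (forall i, B (W i)), (forall i, W i x) &
           (forall z, (forall i, W i z) -> U z)]).

End Topology.

Definition continuous (X Y : Type) (opX : (X -> Prop) -> Prop)
  (opY : (Y -> Prop) -> Prop) (f : X -> Y) : Prop :=
  forall V, opY V -> opX (fun x => V (f x)).

Definition locally_constant (X : Type) (op : (X -> Prop) -> Prop)
  (K : Type) (f : X -> K) : Prop :=
  forall x, exists U, [/\ op U, U x & forall z, U z -> f z = f x].

Definition chi (X : Type) (K : nzRingType) (V : X -> Prop) : X -> K :=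
  fun x => if excluded_middle_informative (V x) then 1%R else 0%R.

(* C_{c,K}(U): the span of the chi_V with V clopen, V inside U *)
Definition in_CcK (X : Type) (op : (X -> Prop) -> Prop) (K : nzRingType)
  (U : X -> Prop) (f : X -> K) : Prop :=
  exists (n : nat) (c : 'I_n -> K) (V : 'I_n -> X -> Prop),
    [/\ (forall i, clopen op (V i)), (forall i x, V i x -> U x) &
        (forall x, f x = \sum_(i < n) c i * chi K (V i) x)%R].

Definition inF (X : Type) (s : seq (X -> Prop)) (Z : X -> Prop) : Prop :=
  exists2 i : nat, (i < size s) & Z = nth (fun _ => False) s i.

Definition is_partition (X : Type) (op : (X -> Prop) -> Prop)
  (s : seq (X -> Prop)) (W : X -> Prop) : Prop :=
  [/\ (forall Z, inF s Z -> clopen op Z /\ exists x, Z x),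
      (forall i j : nat, (i < size s) -> (j < size s) -> i != j ->
         forall x, ~ (nth (fun _ => False) s i x /\ nth (fun _ => False) s j x)) &
      (forall x, W x <-> exists2 Z, inF s Z & Z x)].

(* An element sum_i f_i t^i is represented by a finite list of monomials
   (i, f_i); two lists represent the same element iff they have the same
   coefficient functions [coef]. *)
Section CrossedProduct.
Variables (X : Type) (K : fieldType) (bar : K -> K) (T Tinv : X -> X).

Definition Tpow (i : int) : X -> X :=
  match i with
  | Posz n => iter n T
  | Negz n => iter n.+1 Tinv
  end.

Definition cp := seq (int * (X -> K)).

Definition coef (a : cp) (n : int) (x : X) : K :=
  (\sum_(m <- a) (if m.1 == n then m.2 x else 0))%R.

Definition cp_one : cp := [:: (0%Z, fun _ => 1%R)].
Definition cp_add (a b : cp) : cp := a ++ b.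
Definition cp_scale (c : K) (a : cp) : cp := [seq (m.1, fun x => (c * m.2 x)%R) | m <- a].
(* (f t^i)(g t^j) = f (g o T^{-i}) t^{i+j} *)
Definition cp_mul (a b : cp) : cp :=
  [seq ((m.1 + p.1)%R, fun x => (m.2 x * p.2 (Tpow (- m.1)%R x))%R) | m <- a, p <- b].
(* (f t^i)^* = t^{-i} f^* = (f^* o T^i) t^{-i} *)
Definition cp_star (a : cp) : cp :=
  [seq ((- m.1)%R, fun x => bar (m.2 (Tpow m.1 x))) | m <- a].

(* the unital *-subalgebra generated by G (closed under the equivalence
   "same coefficients", i.e. a subset of the crossed product itself) *)
Inductive gen_star_alg (G : cp -> Prop) : cp -> Prop :=
| gsa_gen a : G a -> gen_star_alg G a
| gsa_one : gen_star_alg G cp_one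
| gsa_add a b : gen_star_alg G a -> gen_star_alg G b -> gen_star_alg G (cp_add a b)
| gsa_scale c a : gen_star_alg G a -> gen_star_alg G (cp_scale c a)
| gsa_mul a b : gen_star_alg G a -> gen_star_alg G b -> gen_star_alg G (cp_mul a b)
| gsa_star a : gen_star_alg G a -> gen_star_alg G (cp_star a)
| gsa_eq a b : gen_star_alg G a -> (forall n x, coef a n x = coef b n x) ->
               gen_star_alg G b.

End CrossedProduct.

(* Every generator chi_Z t of A_n has Z clopen and missing y, so A_n is contained
   in A_y.  Conversely, chi_Z = (chi_Z t)(chi_Z t)^* lies in A_n for Z in P_n,
   hence so does every function constant on the blocks of P_n and on E_n; since
   these sets generate the topology, compactness shows that every locally
   constant function is of this kind for n large.  For g in C_{c,K}(X \ {y}),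
   compactness gives an E_N disjoint from the support of g, and then
   g t = g (sum_{Z in P_N} chi_Z t).  As the A_n increase, their union is a
   *-algebra, so it contains A_y. *)

From HB Require Import structures.
From Stdlib Require Import ClassicalEpsilon Classical.
From mathcomp Require Import all_boot all_order all_algebra.
Set Implicit Arguments. Unset Strict Implicit. Unset Printing Implicit Defensive.
Import GRing.Theory.
Local Open Scope ring_scope.

Section GeneratedStarAlgebra.
Variables (X : Type) (K : fieldType) (bar : K -> K) (T Tinv : X -> X).
Local Notation gsa := (gen_star_alg bar T Tinv).

Lemma gen_star_alg_sub (G H : cp X K -> Prop) :
  (forall a, G a -> gsa H a) -> forall a, gsa G a -> gsa H a.
Proof.
move=> GH a; elim=> {a} [a /GH //| | a b _ + _ | c a _ | a b _ + _ | a _ | a b _].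
- exact: gsa_one.
- exact: gsa_add.
- exact: gsa_scale.
- exact: gsa_mul.
- exact: gsa_star.
- exact: gsa_eq.
Qed.

Lemma gen_star_alg_increasing_union (G : cp X K -> Prop) (H : nat -> cp X K -> Prop) :
  (forall n m a, (n <= m)%N -> gsa (H n) a -> gsa (H m) a) ->
  (forall a, G a -> exists n, gsa (H n) a) ->
  forall a, gsa G a -> exists n, gsa (H n) a.
Proof.
move=> mono gen a.
have join n m a' b' : gsa (H n) a' -> gsa (H m) b' ->
    gsa (H (maxn n m)) a' /\ gsa (H (maxn n m)) b'.
  by move=> Ha Hb; split; [exact: mono (leq_maxl n m) Ha | exact: mono (leq_maxr n m) Hb].
elim=> {a} [a /gen //| | a b _ [n Ha] _ [m Hb] | c a _ [n Ha]
           | a b _ [n Ha] _ [m Hb] | a _ [n Ha] | a b _ [n Ha] Hab].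
- by exists 0%N; exact: gsa_one.
- by have [Ha' Hb'] := join _ _ _ _ Ha Hb; exists (maxn n m); exact: gsa_add.
- by exists n; exact: gsa_scale.
- by have [Ha' Hb'] := join _ _ _ _ Ha Hb; exists (maxn n m); exact: gsa_mul.
- by exists n; exact: gsa_star.
- by exists n; exact: gsa_eq Hab.
Qed.

Variable G : cp X K -> Prop.
Local Notation S := (gsa G).

Lemma coef_monomial (i : int) (f : X -> K) n x :
  coef [:: (i, f)] n x = if i == n then f x else 0.
Proof. by rewrite /coef big_cons big_nil addr0. Qed.

Lemma gsa_monomial_ext i f g : S [:: (i, f)] -> f =1 g -> S [:: (i, g)].
Proof. by move=> Sf fg; apply: (gsa_eq Sf) => n x; rewrite !coef_monomial fg. Qed.

Lemma gsa_monomialD i f g :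
  S [:: (i, f)] -> S [:: (i, g)] -> S [:: (i, fun x => f x + g x)].
Proof.
move=> Sf Sg; apply: (gsa_eq (gsa_add Sf Sg)) => n x.
rewrite /cp_add /coef big_cat /= !big_cons !big_nil !addr0.
by case: (i == n); rewrite ?addr0.
Qed.

Lemma gsa_monomialM0 i f g :
  S [:: (0%Z, f)] -> S [:: (i, g)] -> S [:: (i, fun x => f x * g x)].
Proof.
by move=> Sf Sg; apply: (gsa_eq (gsa_mul Sf Sg)) => n x; rewrite /cp_mul /= !coef_monomial add0r.
Qed.

Lemma gsa_const c : S [:: (0%Z, fun _ => c)].
Proof. by apply: (gsa_monomial_ext (gsa_scale c (gsa_one _ _ _ _))) => x; exact: mulr1. Qed.

Lemma gsa_monomial0 i : S [:: (i, fun _ => 0)].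
Proof.
by apply: (gsa_eq (gsa_const 0)) => n x; rewrite !coef_monomial; case: ifP; case: ifP.
Qed.

Lemma gsa_monomial_sum i n (F : 'I_n -> X -> K) :
  (forall j, S [:: (i, F j)]) -> S [:: (i, fun x => \sum_(j < n) F j x)].
Proof.
elim: n F => [|n IH] F SF.
  by apply: (gsa_monomial_ext (gsa_monomial0 i)) => x; rewrite big_ord0.
have SF' j := SF (widen_ord (leqnSn n) j).
apply: (gsa_monomial_ext (gsa_monomialD (IH _ SF') (SF ord_max))).
by move=> x; rewrite big_ord_recr.
Qed.

Hypothesis Tinv_K : cancel Tinv T.
Hypothesis bar_add : {morph bar : a b / a + b}.
Hypothesis bar1 : bar 1 = 1.

Lemma bar0 : bar 0 = 0.
Proof. by apply: (addrI (bar 0)); rewrite -bar_add !addr0. Qed.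

(* (f t)(f t)^* = f f^*, which is f when f is 0/1-valued. *)
Lemma gsa_idempotent_deg0 f :
  S [:: (1%Z, f)] -> (forall x, f x = 0 \/ f x = 1) -> S [:: (0%Z, f)].
Proof.
move=> Sf f01; apply: (gsa_eq (gsa_mul Sf (gsa_star Sf))) => n x.
rewrite /cp_mul /cp_star /= !coef_monomial /= Tinv_K.
by case: ifP => //; case: (f01 x) => ->; rewrite ?bar0 ?bar1 ?mulr0 ?mulr1.
Qed.

End GeneratedStarAlgebra.

Section Indicator.
Variables (X : Type) (K : fieldType) (V : X -> Prop).

Lemma chi_in x : V x -> chi K V x = 1.
Proof. by rewrite /chi; case: excluded_middle_informative. Qed.

Lemma chi_out x : ~ V x -> chi K V x = 0.
Proof. by rewrite /chi; case: excluded_middle_informative. Qed.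

Lemma chi01 x : chi K V x = 0 \/ chi K V x = 1.
Proof. by rewrite /chi; case: excluded_middle_informative; auto. Qed.

End Indicator.

Lemma finite_upper_bound k (Q : 'I_k -> nat -> Prop) :
  (forall i, exists n, Q i n) -> exists M, forall i, exists2 n, (n <= M)%N & Q i n.
Proof.
elim: k Q => [|k IH] Q HQ; first by exists 0%N => -[].
have [M HM] := IH (fun j => Q (lift ord_max j)) (fun j => HQ _).
have [n0 Hn0] := HQ ord_max.
exists (maxn M n0) => i; case: (unliftP ord_max i) => [j ->|->].
  by have [n Hn HQn] := HM j; exists n => //; exact: leq_trans Hn (leq_maxl _ _).
by exists n0 => //; exact: leq_maxr.
Qed.

Section LocallyConstant.
Variables (X : Type) (op : (X -> Prop) -> Prop) (K : fieldType).
Hypothesis Htop : is_topology op.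
Local Notation lc := (locally_constant op).

Lemma lc_ext (f g : X -> K) : lc f -> f =1 g -> lc g.
Proof.
move=> lcf fg x; have [U [oU Ux Uf]] := lcf x.
by exists U; split => // z Uz; rewrite -!fg Uf.
Qed.

Lemma lc_const (c : K) : lc (fun _ => c).
Proof. by move=> x; have [opT _ _] := Htop; exists (fun _ => True). Qed.

Lemma lc_binop (o : K -> K -> K) (f g : X -> K) : lc f -> lc g -> lc (fun x => o (f x) (g x)).
Proof.
move=> lcf lcg x; have [U [oU Ux Uf]] := lcf x; have [V [oV Vx Vg]] := lcg x.
have [_ opI _] := Htop.
exists (fun z => U z /\ V z); split; [exact: opI | by [] |].
by move=> z [Uz Vz]; rewrite Uf // Vg.
Qed.

Lemma lc_chi V : clopen op V -> lc (chi K V).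
Proof.
move=> [oV onV] x; case: (classic (V x)) => Vx.
  by exists V; split => // z Vz; rewrite !chi_in.
by exists (fun z => ~ V z); split => // z Vz; rewrite !chi_out.
Qed.

Lemma lc_sum n (F : 'I_n -> X -> K) : (forall i, lc (F i)) -> lc (fun x => \sum_(i < n) F i x).
Proof.
elim: n F => [|n IH] F lcF.
  by apply: (lc_ext (lc_const 0)) => x; rewrite big_ord0.
apply: (lc_ext (lc_binop +%R (IH _ (fun j => lcF (widen_ord (leqnSn n) j))) (lcF ord_max))).
by move=> x; rewrite big_ord_recr.
Qed.

Lemma lc_CcK U (g : X -> K) : in_CcK op U g -> lc g.
Proof.
move=> [k [c [V [cV _ gE]]]]; apply: lc_ext (fun x => esym (gE x)).
exact: lc_sum (fun i => lc_binop *%R (lc_const (c i)) (lc_chi (cV i))).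
Qed.

End LocallyConstant.

Section Filtration.
Variables (X : Type) (op : (X -> Prop) -> Prop).
Hypothesis Htop : is_topology op.
Hypothesis Hcpt : compact op.
Variables (T Tinv : X -> X) (K : fieldType) (bar : K -> K).
Hypothesis Tinv_K : cancel Tinv T.
Hypothesis bar_add : {morph bar : a b / a + b}.
Hypothesis bar1 : bar 1 = 1.
Variables (y : X) (E : nat -> X -> Prop) (P : nat -> seq (X -> Prop)).
Hypothesis HEclopen : forall n, clopen op (E n).
Hypothesis HEdecr : forall n x, E n.+1 x -> E n x.
Hypothesis HEcap : forall x, (forall n, E n x) <-> x = y.
Hypothesis HPpart : forall n, is_partition op (P n) (fun x => ~ E n x).
Hypothesis HPrefine : forall n Z, (inF (P n.+1) Z \/ Z = E n.+1) ->
  exists2 W, (inF (P n) W \/ W = E n) & (forall x, Z x -> W x).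
Hypothesis HPgen : generates_topology op (fun Z => exists n, inF (P n) Z \/ Z = E n).

Local Notation block m Z := (inF (P m) Z \/ Z = E m).
Local Notation Pj m j := (nth (fun _ => False) (P m) j).
Local Notation A m := (gen_star_alg bar T Tinv
  (fun a => exists2 Z, inF (P m) Z & a = [:: (1%Z, chi K Z)])).

Lemma E_decr n m x : (n <= m)%N -> E m x -> E n x.
Proof.
elim: m => [|m IH]; first by rewrite leqn0 => /eqP ->.
by rewrite leq_eqVlt => /orP [/eqP -> //| lt_nm] Ex; apply: IH => //; exact: HEdecr.
Qed.

Lemma E_y n : E n y.
Proof. exact: (proj2 (HEcap y)). Qed.

Lemma partition_notE m Z x : inF (P m) Z -> Z x -> ~ E m x.
Proof. by move=> PZ Zx; have [_ _ cover] := HPpart m; apply/cover; exists Z. Qed.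

Lemma partition_clopen m Z : inF (P m) Z -> clopen op Z.
Proof. by have [blocks _ _] := HPpart m; move=> /blocks []. Qed.

Lemma block_open m Z : block m Z -> op Z.
Proof. by case=> [/partition_clopen []|->] //; exact: (HEclopen m).1. Qed.

Lemma block_cover m x : exists2 Z, block m Z & Z x.
Proof.
case: (classic (E m x)) => Ex; first by exists (E m); auto.
by have [_ _ cover] := HPpart m; have [Z PZ Zx] := (cover x).1 Ex; exists Z; auto.
Qed.

Lemma block_disjoint m Z W x : block m Z -> block m W -> Z x -> W x -> Z = W.
Proof.
have [_ disj _] := HPpart m.
case=> [PZ|->]; case=> [PW|->] // Zx Wx.
- case: PZ Zx => i Hi -> Zx; case: PW Wx => j Hj -> Wx.
  case: (eqVneq i j) => [->//|ij]; exfalso; exact: disj i j Hi Hj ij x (conj Zx Wx).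
- by case: (partition_notE PZ Zx).
- by case: (partition_notE PW Wx).
Qed.

Lemma block_coarsen n d Z : block (n + d) Z -> exists2 W, block n W & forall x, Z x -> W x.
Proof.
elim: d Z => [|d IH] Z; first by rewrite addn0 => BZ; exists Z.
rewrite addnS => /HPrefine [W BW ZW]; have [W' BW' WW'] := IH W BW.
by exists W' => // x /ZW /WW'.
Qed.

Lemma block_refine n m Z W z : (n <= m)%N -> block m Z -> block n W -> Z z -> W z ->
  forall x, Z x -> W x.
Proof.
move=> le_nm BZ BW Zz Wz; move: BZ; rewrite -(subnKC le_nm) => /block_coarsen [W' BW' ZW'].
by rewrite -(block_disjoint BW' BW (ZW' _ Zz) Wz).
Qed.

Lemma partition_sum_out m x (F : 'I_(size (P m)) -> K) :
  E m x -> \sum_(j < size (P m)) F j * chi K (Pj m j) x = 0.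
Proof.
move=> Ex; apply: big1 => j _; rewrite chi_out ?mulr0 // => Pjx.
by apply: (partition_notE _ Pjx Ex); exists j.
Qed.

Lemma partition_sum_in m x : ~ E m x -> exists j0 : 'I_(size (P m)), Pj m j0 x /\
  forall F : 'I_(size (P m)) -> K, \sum_(j < size (P m)) F j * chi K (Pj m j) x = F j0.
Proof.
move=> nEx; have [_ disj cover] := HPpart m; have [Z [i Hi ->] Zx] := (cover x).1 nEx.
exists (Ordinal Hi); split => // F; rewrite (bigD1 (Ordinal Hi)) //= chi_in // mulr1.
rewrite big1 ?addr0 // => j ji; rewrite chi_out ?mulr0 // => Pjx.
have ji' : nat_of_ord j != i by apply: contra ji => /eqP eq_ji; apply/eqP/val_inj.
exact: disj j i (ltn_ord j) Hi ji' x (conj Pjx Zx).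
Qed.

Lemma A_partition_deg1 m : A m [:: (1%Z, fun x => \sum_(j < size (P m)) 1 * chi K (Pj m j) x)].
Proof.
apply: gsa_monomial_sum => j.
apply: (gsa_monomial_ext (f := chi K (Pj m j))); last by move=> x; rewrite mul1r.
by apply: gsa_gen; exists (Pj m j) => //; exists j.
Qed.

(* On the complement of E m the sum above is 1, so multiplying by it kills E m. *)
Lemma A_deg1_off_E m g : A m [:: (0%Z, g)] -> (forall x, E m x -> g x = 0) -> A m [:: (1%Z, g)].
Proof.
move=> Ag gE; apply: (gsa_monomial_ext (gsa_monomialM0 Ag (A_partition_deg1 m))) => x.
case: (classic (E m x)) => Ex; first by rewrite gE ?mul0r.
by have [j0 [_ ->]] := partition_sum_in Ex; rewrite mulr1.
Qed.

Lemma A_chi_deg0 m (j : 'I_(size (P m))) : A m [:: (0%Z, chi K (Pj m j))].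
Proof.
apply: gsa_idempotent_deg0 => //; last exact: chi01.
by apply: gsa_gen; exists (Pj m j) => //; exists j.
Qed.

(* Such an f is the sum of its values on the blocks of P m times their
   indicators, plus the constant f y times 1 - sum_j chi_(P m j). *)
Lemma A_block_constant m (f : X -> K) :
  (forall Z, block m Z -> forall z w, Z z -> Z w -> f z = f w) -> A m [:: (0%Z, f)].
Proof.
move=> fB.
pose p (j : 'I_(size (P m))) := epsilon (inhabits y) (fun x => Pj m j x).
have Pjp (j : 'I_(size (P m))) : Pj m j (p j).
  apply: (epsilon_spec (inhabits y) (fun x => Pj m j x)).
  by have [blocks _ _] := HPpart m; apply: (blocks (Pj m j) _).2; exists j.
have Asum c : A m [:: (0%Z, fun x => \sum_(j < size (P m)) c j * chi K (Pj m j) x)].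
  by apply: gsa_monomial_sum => j; apply: gsa_monomialM0; [exact: gsa_const | exact: A_chi_deg0].
have AE := gsa_monomialM0 (gsa_const _ _ _ _ (f y))
  (gsa_monomialD (gsa_const _ _ _ _ 1) (gsa_monomialM0 (gsa_const _ _ _ _ (-1)) (Asum (fun=> 1)))).
apply: (gsa_monomial_ext (gsa_monomialD (Asum (fun j => f (p j))) AE)) => x.
case: (classic (E m x)) => Ex.
  rewrite !partition_sum_out // mulr0 addr0 mulr1 add0r.
  by apply: (fB (E m)) => //; [right | exact: E_y].
have [j0 [Pj0x sumE]] := partition_sum_in Ex; rewrite !sumE mulr1 subrr mulr0 addr0.
by apply: (fB (Pj m j0)) => //; left; exists j0.
Qed.

Lemma A_increasing n m a : (n <= m)%N -> A n a -> A m a.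
Proof.
move=> le_nm; apply: gen_star_alg_sub => _ [Z PZ ->].
apply: A_deg1_off_E => [|x Ex]; last first.
  by rewrite chi_out // => Zx; exact: partition_notE PZ Zx (E_decr le_nm Ex).
apply: A_block_constant => W BW z w Wz Ww.
have ZW := block_refine le_nm BW (or_introl PZ).
case: (classic (Z z)) => Zz; first by rewrite !chi_in //; exact: ZW Wz Zz _ Ww.
case: (classic (Z w)) => Zw; last by rewrite !chi_out.
by case: Zz; exact: ZW Ww Zw _ Wz.
Qed.

(* Cover X by the blocks on which f is constant, then take a finite subcover. *)
Lemma lc_in_A f : locally_constant op f -> exists m, A m [:: (0%Z, f)].
Proof.
move=> lcf.
pose F B := exists n, block n B /\ forall z w, B z -> B w -> f z = f w.
have F_open B : F B -> op B by move=> [n [BB _]]; exact: block_open BB.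
have F_cover x : exists2 B, F B & B x.
  have [U [oU Ux Uf]] := lcf x.
  have [k [W [BW Wx WU]]] := (proj1 (HPgen U) oU) x Ux.
  have [N HN] := finite_upper_bound BW.
  have [B BB Bx] := block_cover N x.
  have BU z : B z -> U z.
    move=> Bz; apply: WU => i; have [n le_nN BWi] := HN i.
    exact: block_refine le_nN BB BWi Bx (Wx i) _ Bz.
  by exists B => //; exists N; split => // z w Bz Bw; rewrite (Uf _ (BU _ Bz)) (Uf _ (BU _ Bw)).
have [k [U [FU Ucover]]] := Hcpt F_open F_cover.
have [M HM] := finite_upper_bound FU.
exists M; apply: A_block_constant => Z BZ z w Zz Zw.
have [i Uiz] := Ucover z; have [n le_nM [BUi Uif]] := HM i.
have ZU := block_refine le_nM BZ BUi Zz Uiz.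
exact: Uif (ZU _ Zz) (ZU _ Zw).
Qed.

(* The complement of V and the complements of the E n cover X. *)
Lemma clopen_avoids_E V : clopen op V -> ~ V y -> exists N, forall x, E N x -> ~ V x.
Proof.
move=> [oV onV] nVy.
pose F U := U = (fun x => ~ V x) \/ exists n, U = (fun x => ~ E n x).
have F_open U : F U -> op U by case=> [->|[n ->]] //; exact: (HEclopen n).2.
have F_cover x : exists2 U, F U & U x.
  case: (classic (V x)) => Vx; last by exists (fun x => ~ V x); [left|].
  have : ~ (forall n, E n x) by move=> /HEcap xy; apply: nVy; rewrite -xy.
  by move=> /not_all_ex_not [n nEx]; exists (fun x => ~ E n x) => //; right; exists n.
have [k [U [FU Ucover]]] := Hcpt F_open F_cover.
have HQ i : exists n, U i = (fun x => ~ V x) \/ U i = (fun x => ~ E n x).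
  by case: (FU i) => [->|[n ->]]; [exists 0%N; left | exists n; right].
have [N HN] := finite_upper_bound HQ.
exists N => x ENx Vx; have [i Uix] := Ucover x.
have [n le_nN [Ui|Ui]] := HN i; rewrite Ui in Uix; first exact: Uix.
exact: Uix (E_decr le_nN ENx).
Qed.

Lemma CcK_deg1_in_A g : in_CcK op (fun x => x <> y) g -> exists m, A m [:: (1%Z, g)].
Proof.
move=> CcKg; have [m1 Am1] := lc_in_A (lc_CcK Htop CcKg).
have [k [c [V [cV Vy gE]]]] := CcKg.
have [N HN] := finite_upper_bound (fun i => clopen_avoids_E (cV i) (fun Viy => Vy i y Viy erefl)).
exists (maxn m1 N); apply: A_deg1_off_E; first exact: A_increasing (leq_maxl m1 N) Am1.
move=> x Ex; rewrite gE; apply: big1 => i _; rewrite chi_out ?mulr0 //.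
have [n le_nN nVi] := HN i; apply: nVi; apply: E_decr Ex.
exact: leq_trans le_nN (leq_maxr _ _).
Qed.

End Filtration.

Unset Implicit Arguments.
Theorem lemma4p3
  (X : Type) (op : (X -> Prop) -> Prop)
  (Htop : is_topology op) (Hinf : infinite_type X)
  (Htd : totally_disconnected op) (Hcpt : compact op) (Hmet : metrizable op)
  (T Tinv : X -> X) (HT1 : cancel T Tinv) (HT2 : cancel Tinv T)
  (HTc : continuous op op T) (HTic : continuous op op Tinv)
  (K : fieldType) (bar : K -> K)
  (Hbar_add : forall a b, bar (a + b) = bar a + bar b)
  (Hbar_mul : forall a b, bar (a * b) = bar a * bar b)
  (Hbar_one : bar 1 = 1) (Hbar_inv : involutive bar)
  (y : X) (E : nat -> X -> Prop) (P : nat -> seq (X -> Prop))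
  (HEclopen : forall n, clopen op (E n))
  (HEdecr : forall n x, E n.+1 x -> E n x)
  (HEcap : forall x, (forall n, E n x) <-> x = y)
  (HPpart : forall n, is_partition op (P n) (fun x => ~ E n x))
  (HPrefine : forall n Z, (inF (P n.+1) Z \/ Z = E n.+1) ->
     exists2 W, (inF (P n) W \/ W = E n) & (forall x, Z x -> W x))
  (HPgen : generates_topology op (fun Z => exists n, inF (P n) Z \/ Z = E n)) :
  let A_n (n : nat) := gen_star_alg bar T Tinv
        (fun a => exists2 Z, inF (P n) Z & a = [:: (1%Z, chi K Z)]) in
  let A_y := gen_star_alg bar T Tinv
        (fun a => (exists2 f, locally_constant op f & a = [:: (0%Z, f)]) \/
                  (exists2 g, in_CcK op (fun x => x <> y) g & a = [:: (1%Z, g)])) in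
  forall a : cp X K, (exists n, A_n n a) <-> A_y a.
Proof.
move=> A_n A_y a; split.
  move=> [n]; apply: gen_star_alg_sub => _ [Z PZ ->]; apply: gsa_gen; right.
  exists (chi K Z) => //; exists 1%N, (fun=> 1), (fun=> Z); split.
  - by move=> _; exact: (partition_clopen HPpart PZ).
  - by move=> _ x Zx xy; apply: (partition_notE HPpart PZ Zx); rewrite xy; exact: (E_y HEcap).
  - by move=> x; rewrite big_ord_recl big_ord0 addr0 mul1r.
have A_mono := A_increasing HT2 Hbar_add Hbar_one HEdecr HEcap HPpart HPrefine.
apply: (gen_star_alg_increasing_union A_mono) => _ [[f lcf ->]|[g CcKg ->]].
- exact: (lc_in_A Hcpt HT2 Hbar_add Hbar_one HEclopen HEcap HPpart HPrefine HPgen lcf).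
- exact: (CcK_deg1_in_A Htop Hcpt HT2 Hbar_add Hbar_one HEclopen HEdecr HEcap HPpart
    HPrefine HPgen CcKg).
Qed.
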